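(* Let $\Gamma$ be a group and let $S$ and $T$ be $\Gamma$-graded semigroups with local units. If $S$ and $T$ are graded Morita equivalent, then they are Morita equivalent.
   Context: All semigroups have a zero; a $\Gamma$-grading on $S$ is a map $\deg:S\setminus\{0\}\to\Gamma$ with $\deg(st)=\deg(s)\deg(t)$ when $st\neq0$, $S_\alpha=\deg^{-1}(\alpha)\cup\{0\}$. $S$ has local units if for each $s$ there are idempotents $u,v$ with $us=s=sv$. Left $S$-sets are pointed (with $0_X$, $0x=0_X$) and unital ($SX=X$); a $\Gamma$-graded left $S$-set has $\deg:X\setminus\{0_X\}\to\Gamma$ with $\deg(sx)=\deg(s)\deg(x)$ when $sx\neq0_X$, $X_\alpha=\deg^{-1}(\alpha)\cup\{0_X\}$. For a left $S$-set $X$, $S\otimes_S X$ is $S\times X$ modulo the equivalence relation generated by $(st,x)\sim(s,tx)$; $X$ is closed if the map $S\otimes_S X\to X$, $s\otimes x\mapsto sx$, is bijective. $\mathrm{FAct}\text{-}S$ is the category of closed left $S$-sets with $S$-maps; $\mathrm{FGrAct}\text{-}S$ is the category of closed $\Gamma$-graded left $S$-sets with graded $S$-maps ($\phi(X_\alpha)\subseteq Y_\alpha$). For $\alpha\in\Gamma$ the shift functor $\mathcal{T}_\alpha$ sends a graded $X$ to $X(\alpha)$, the same $S$-set with $X(\alpha)_\beta=X_{\beta\alpha}$, and is the identity on morphisms. A functor $\mathcal F$ between such graded categories is graded if $\mathcal F\mathcal T_\alpha=\mathcal T_\alpha\mathcal F$ for all $\alpha$; a graded equivalence is a graded functor $\mathcal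 F$ with a graded functor $\mathcal F'$ such that $\mathcal F'\mathcal F$ and $\mathcal F\mathcal F'$ are naturally isomorphic to the identities. $S$ and $T$ are graded Morita equivalent if there is a graded equivalence between $\mathrm{FGrAct}\text{-}S$ and $\mathrm{FGrAct}\text{-}T$, and Morita equivalent if $\mathrm{FAct}\text{-}S$ and $\mathrm{FAct}\text{-}T$ are equivalent categories. *)

From Stdlib Require Import Relation_Operators.

Set Implicit Arguments.
Unset Strict Implicit.

Record Group := {
  gr_car :> Type;
  gmul : gr_car -> gr_car -> gr_car;
  gone : gr_car;
  ginv : gr_car -> gr_car;
  gmulA : forall a b c, gmul a (gmul b c) = gmul (gmul a b) c;
  gmul1l : forall a, gmul gone a = a;
  gmul1r : forall a, gmul a gone = a;
  gmulVl : forall a, gmul (ginv a) a = gone;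
  gmulVr : forall a, gmul a (ginv a) = gone
}.
Arguments gmul {g}.
Arguments gone {g}.
Arguments ginv {g}.

Record SemigroupZ := {
  sg_car :> Type;
  smul : sg_car -> sg_car -> sg_car;
  szero : sg_car;
  smulA : forall s t u, smul s (smul t u) = smul (smul s t) u;
  smul0l : forall s, smul szero s = szero;
  smul0r : forall s, smul s szero = szero
}.
Arguments smul {_} _ _.
Arguments szero {_}.

Definition idempotent (S : SemigroupZ) (u : S) : Prop := smul u u = u.
Definition has_local_units (S : SemigroupZ) : Prop :=
  forall s : S, exists u v : S,
    idempotent u /\ idempotent v /\ smul u s = s /\ smul s v = s.

(* Gamma-graded semigroups.  deg is only constrained on nonzero
   products; its value at 0 is irrelevant (S_alpha = deg^-1(alpha) U {0}). *)
Record GrSemigroup (G : Group) := {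
  gs_sg :> SemigroupZ;
  gs_deg : gs_sg -> G;
  gs_degM : forall s t : gs_sg, smul s t <> szero ->
     gs_deg (smul s t) = gmul (gs_deg s) (gs_deg t)
}.

Record SAct (S : SemigroupZ) := {
  act_car :> Type;
  act_zero : act_car;
  act : S -> act_car -> act_car;
  actA : forall (s t : S) x, act (smul s t) x = act s (act t x);
  act0 : forall x, act szero x = act_zero;
  act_unital : forall x, exists (s : S) (y : act_car), act s y = x
}.
Arguments act_zero {_ _}.
Arguments act {_ _} _ _.

(* S (x)_S X : the generating relation (st, x) ~ (s, tx) and the
   equivalence relation it generates on S * X. *)
Definition tens_step (S : SemigroupZ) (X : SAct S) (p q : S * X) : Prop :=
  exists (s t : S) (x : X), p = (smul s t, x) /\ q = (s, act t x).
Definition tens_equiv (S : SemigroupZ) (X : SAct S) : S * X -> S * X -> Prop :=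
  clos_refl_sym_trans _ (@tens_step S X).

(* X is closed: the (well-defined) map S (x)_S X -> X, s (x) x |-> s x, is
   bijective, i.e. surjective, and injective on equivalence classes. *)
Definition closed_act (S : SemigroupZ) (X : SAct S) : Prop :=
  (forall x : X, exists p : S * X, act (fst p) (snd p) = x) /\
  (forall p q : S * X, act (fst p) (snd p) = act (fst q) (snd q) ->
                       tens_equiv p q).

Record SMap (S : SemigroupZ) (X Y : SAct S) := {
  smap :> X -> Y;
  smap_act : forall (s : S) x, smap (act s x) = act s (smap x)
}.

Record GrSAct (G : Group) (S : GrSemigroup G) := {
  gact :> SAct S;
  gact_deg : gact -> G;
  gact_degM : forall (s : S) (x : gact), act s x <> act_zero ->
     gact_deg (act s x) = gmul (gs_deg s) (gact_deg x)
}.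
Arguments gact_deg {_ _ _} _.

Definition homog (G : Group) (S : GrSemigroup G) (X : GrSAct S) (a : G) (x : X)
  : Prop := x = act_zero \/ gact_deg x = a.

Record GrSMap (G : Group) (S : GrSemigroup G) (X Y : GrSAct S) := {
  gsmap :> SMap X Y;
  gsmap_deg : forall (a : G) (x : X), homog a x -> homog a (gsmap x)
}.

(* Minimal category theory (morphism equality is a setoid equality Heq;
   for the concrete categories below Heq is pointwise equality of maps). *)
Record Cat := {
  Ob :> Type;
  Hom : Ob -> Ob -> Type;
  Heq : forall A B, Hom A B -> Hom A B -> Prop;
  idm : forall A, Hom A A;
  comp : forall A B C, Hom B C -> Hom A B -> Hom A C;
  heq_refl : forall A B (f : Hom A B), Heq f f;
  heq_sym : forall A B (f g : Hom A B), Heq f g -> Heq g f;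
  heq_trans : forall A B (f g h : Hom A B), Heq f g -> Heq g h -> Heq f h;
  comp_heq : forall A B C (f f' : Hom B C) (g g' : Hom A B),
      Heq f f' -> Heq g g' -> Heq (comp f g) (comp f' g');
  comp_idl : forall A B (f : Hom A B), Heq (comp (idm B) f) f;
  comp_idr : forall A B (f : Hom A B), Heq (comp f (idm A)) f;
  compA : forall A B C D (h : Hom C D) (g : Hom B C) (f : Hom A B),
      Heq (comp h (comp g f)) (comp (comp h g) f)
}.
Arguments Hom {c}.
Arguments Heq {c A B}.
Arguments idm {c}.
Arguments comp {c A B C}.

Record Functor (C D : Cat) := {
  fobj :> C -> D;
  fmap : forall A B, Hom A B -> Hom (fobj A) (fobj B);
  fmap_heq : forall A B (f g : Hom A B), Heq f g -> Heq (fmap f) (fmap g);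
  fmap_id : forall A, Heq (fmap (idm A)) (idm (fobj A));
  fmap_comp : forall A B C (g : Hom B C) (f : Hom A B),
      Heq (fmap (comp g f)) (comp (fmap g) (fmap f))
}.
Arguments fmap {C D} _ {A B} _.

Definition IdF (C : Cat) : Functor C C.
Proof.
  refine {| fobj := fun A => A; fmap := fun A B f => f |}.
  - auto.
  - intros; apply heq_refl.
  - intros; apply heq_refl.
Defined.

Definition CompF (C D E : Cat) (G : Functor D E) (F : Functor C D)
  : Functor C E.
Proof.
  refine {| fobj := fun A => G (F A);
            fmap := fun A B f => fmap G (fmap F f) |}.
  - intros A B f g H. apply fmap_heq, fmap_heq, H.
  - intros A. eapply heq_trans; [apply fmap_heq, fmap_id | apply fmap_id].
  - intros A B C0 g f. eapply heq_trans;
      [apply fmap_heq, fmap_comp | apply fmap_comp].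
Defined.

Record NatIso (C D : Cat) (F G : Functor C D) := {
  ni_eta : forall A, Hom (F A) (G A);
  ni_inv : forall A, Hom (G A) (F A);
  ni_inv_eta : forall A, Heq (comp (ni_inv A) (ni_eta A)) (idm (F A));
  ni_eta_inv : forall A, Heq (comp (ni_eta A) (ni_inv A)) (idm (G A));
  ni_nat : forall A B (f : Hom A B),
      Heq (comp (ni_eta B) (fmap F f)) (comp (fmap G f) (ni_eta A))
}.

Definition CatEquivalent (C D : Cat) : Prop :=
  exists (F : Functor C D) (F' : Functor D C),
    inhabited (NatIso (CompF F' F) (IdF C)) /\
    inhabited (NatIso (CompF F F') (IdF D)).

Definition hom_cast (C : Cat) (A A' B B' : C) (e1 : A = A') (e2 : B = B')
  (f : Hom A B) : Hom A' B' :=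
  match e1 in _ = A1, e2 in _ = B1 return Hom A1 B1 with
  | eq_refl, eq_refl => f end.

Definition FunctorEq (C D : Cat) (F G : Functor C D) : Prop :=
  exists e : forall A, F A = G A,
    forall A B (f : Hom A B), Heq (hom_cast (e A) (e B) (fmap F f)) (fmap G f).

Record FActOb (S : SemigroupZ) := {
  fa_act :> SAct S;
  fa_closed : closed_act fa_act
}.

Definition FAct (S : SemigroupZ) : Cat.
Proof.
  refine {| Ob := FActOb S;
            Hom := fun X Y => SMap X Y;
            Heq := fun X Y f g => forall x, f x = g x;
            idm := fun X => {| smap := fun x => x; smap_act := fun s x => eq_refl |};
            comp := fun X Y Z g f => {| smap := fun x => g (f x);
              smap_act := fun s x => eq_trans (f_equal g (smap_act f s x)) (smap_act g s (f x)) |} |};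
    intros; simpl in *; congruence.
Defined.

Record FGrActOb (G : Group) (S : GrSemigroup G) := {
  fg_act :> GrSAct S;
  fg_closed : closed_act fg_act
}.

Definition gid (G : Group) (S : GrSemigroup G) (X : GrSAct S) : GrSMap X X.
Proof.
  refine {| gsmap := {| smap := fun x => x; smap_act := fun s x => eq_refl |} |}; auto.
Defined.

Definition gcomp (G : Group) (S : GrSemigroup G) (X Y Z : GrSAct S)
  (g : GrSMap Y Z) (f : GrSMap X Y) : GrSMap X Z.
Proof.
  refine {| gsmap := {| smap := fun x => g (f x);
     smap_act := fun s x => eq_trans (f_equal g (smap_act f s x)) (smap_act g s (f x)) |} |}.
  intros a x H; simpl; apply gsmap_deg, gsmap_deg, H.
Defined.

Definition FGrAct (G : Group) (S : GrSemigroup G) : Cat.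
Proof.
  refine {| Ob := FGrActOb S;
            Hom := fun X Y => GrSMap X Y;
            Heq := fun X Y f g => forall x, f x = g x;
            idm := fun X => gid X;
            comp := fun X Y Z g f => gcomp g f |};
    intros; simpl in *; congruence.
Defined.

(* shift X(alpha): same S-set, X(alpha)_beta = X_(beta alpha), i.e. the
   new degree of x is deg(x) alpha^-1. *)
Lemma shift_degM (G : Group) (S : GrSemigroup G) (X : GrSAct S) (a : G) :
  forall (s : S) (x : X), act s x <> act_zero ->
    gmul (gact_deg (act s x)) (ginv a) =
    gmul (gs_deg s) (gmul (gact_deg x) (ginv a)).
Proof.
  intros s x H. rewrite gact_degM by exact H. symmetry; apply gmulA.
Qed.

Definition shift_gr (G : Group) (S : GrSemigroup G) (a : G) (X : GrSAct S)
  : GrSAct S :=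
  {| gact := X; gact_deg := fun x => gmul (gact_deg x) (ginv a);
     gact_degM := @shift_degM G S X a |}.

Definition shiftOb (G : Group) (S : GrSemigroup G) (a : G) (X : FGrActOb S)
  : FGrActOb S :=
  {| fg_act := shift_gr a X; fg_closed := fg_closed X |}.

Lemma shift_hom_deg (G : Group) (S : GrSemigroup G) (a : G) (X Y : GrSAct S)
  (f : GrSMap X Y) :
  forall (b : G) (x : shift_gr a X), homog b x -> homog b (f x : shift_gr a Y).
Proof.
  intros b x [H|H]; unfold homog in *; simpl in *.
  - left. rewrite H. rewrite <- (@act0 S X act_zero), smap_act, act0.
    reflexivity.
  - assert (Hx : homog (gmul b a) x).
    { right. rewrite <- H, <- gmulA, gmulVl, gmul1r. reflexivity. }
    destruct (gsmap_deg f Hx) as [H'|H'].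
    + left; exact H'.
    + right. rewrite H', <- gmulA, gmulVr, gmul1r. reflexivity.
Qed.

Definition shift_hom (G : Group) (S : GrSemigroup G) (a : G) (X Y : GrSAct S)
  (f : GrSMap X Y) : GrSMap (shift_gr a X) (shift_gr a Y) :=
  @Build_GrSMap G S (shift_gr a X) (shift_gr a Y)
    (@Build_SMap S (shift_gr a X) (shift_gr a Y) (fun x => f x) (smap_act f))
    (@shift_hom_deg G S a X Y f).

Definition ShiftF (G : Group) (S : GrSemigroup G) (a : G)
  : Functor (FGrAct S) (FGrAct S).
Proof.
  refine (@Build_Functor (FGrAct S) (FGrAct S)
            (fun X : FGrAct S => (shiftOb a X : FGrAct S))
            (fun (X Y : FGrAct S) (f : Hom X Y) =>
               (shift_hom a (f : GrSMap X Y) : @Hom (FGrAct S) (shiftOb a X) (shiftOb a Y)))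
            _ _ _);
    intros; simpl in *; auto.
Defined.

Definition graded_functor (G : Group) (S T : GrSemigroup G)
  (F : Functor (FGrAct S) (FGrAct T)) : Prop :=
  forall a : G, FunctorEq (CompF F (ShiftF S a)) (CompF (ShiftF T a) F).

Definition graded_Morita_equivalent (G : Group) (S T : GrSemigroup G) : Prop :=
  exists (F : Functor (FGrAct S) (FGrAct T)) (F' : Functor (FGrAct T) (FGrAct S)),
    graded_functor F /\ graded_functor F' /\
    inhabited (NatIso (CompF F' F) (IdF (FGrAct S))) /\
    inhabited (NatIso (CompF F F') (IdF (FGrAct T))).

Definition Morita_equivalent (S T : SemigroupZ) : Prop :=
  CatEquivalent (FAct S) (FAct T).

(* A graded functor F : FGrAct-S -> FGrAct-T commutes with the shifts, so it lifts to the
   categories EqvCat S, EqvCat T of closed graded sets A equipped with graded isomorphisms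
   e_g : A -> A(g) satisfying e_h o e_g = e_(gh) and e_1 = id; if F is fully faithful and
   essentially surjective, so is its lift.  When S has local units, EqvCat S is equivalent to
   FAct-S: a closed S-set X gives the graded S-set ((X \ {0}) x Gamma) + {0}, graded by the
   second coordinate, with e_g (x, b) = (x, b g); conversely A gives its degree-one component
   A_e, on which s acts by a |-> e_(deg(s)^-1) (s a), and local units make A_e closed.  Hence
   FAct-S ~ EqvCat S ~ EqvCat T ~ FAct-T. *)

From Stdlib Require Import Relation_Operators ClassicalEpsilon ProofIrrelevance
  FunctionalExtensionality Setoid Morphisms.

Set Implicit Arguments.
Unset Strict Implicit.

#[export] Instance Heq_Equivalence (C : Cat) (A B : C) : Equivalence (@Heq C A B).
Proof. split; red; [apply heq_refl | apply heq_sym | apply heq_trans]. Qed.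

#[export] Instance comp_Proper (C : Cat) (A B D : C) :
  Proper (Heq ==> Heq ==> Heq) (@comp C A B D).
Proof. intros f f' Hf g g' Hg. apply comp_heq; auto. Qed.

#[export] Instance fmap_Proper (C D : Cat) (F : Functor C D) (A B : C) :
  Proper (Heq ==> Heq) (@fmap C D F A B).
Proof. intros f g H. apply fmap_heq, H. Qed.

(** * Equivalences of categories *)

Definition isIso (C : Cat) (A B : C) : Prop :=
  exists (i : Hom A B) (j : Hom B A), Heq (comp j i) (idm A) /\ Heq (comp i j) (idm B).

Lemma isIso_trans (C : Cat) (A B E : C) : isIso A B -> isIso B E -> isIso A E.
Proof.
  intros (i & j & H1 & H2) (i' & j' & H1' & H2').
  exists (comp i' i), (comp j j'). split.
  - rewrite <- compA, (compA j' i' i), H1', comp_idl, H1. reflexivity.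
  - rewrite <- compA, (compA i j j'), H2, comp_idl, H2'. reflexivity.
Qed.

Lemma isIso_fmap (C D : Cat) (F : Functor C D) (A B : C) : isIso A B -> isIso (F A) (F B).
Proof.
  intros (i & j & H1 & H2). exists (fmap F i), (fmap F j). split.
  - rewrite <- fmap_comp, H1, fmap_id. reflexivity.
  - rewrite <- fmap_comp, H2, fmap_id. reflexivity.
Qed.

Section FunctorProperties.
Variables (C D : Cat) (F : Functor C D).

Definition faithful : Prop :=
  forall A B (f g : Hom A B), Heq (fmap F f) (fmap F g) -> Heq f g.
Definition full : Prop :=
  forall A B (h : Hom (F A) (F B)), exists f, Heq (fmap F f) h.
Definition ess_surj : Prop := forall B, exists A, isIso (F A) B.
Definition ff_ess_surj : Prop := faithful /\ full /\ ess_surj.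

End FunctorProperties.

Section QuasiInverse.
Variables (C D : Cat) (F : Functor C D).
Hypotheses (F_faithful : faithful F) (F_full : full F) (F_ess_surj : ess_surj F).

Definition preimage A B (h : Hom (F A) (F B)) : Hom A B :=
  proj1_sig (constructive_indefinite_description _ (F_full h)).

Lemma fmap_preimage A B (h : Hom (F A) (F B)) : Heq (fmap F (preimage h)) h.
Proof. exact (proj2_sig (constructive_indefinite_description _ (F_full h))). Qed.

Definition inv_ob (B : D) : C :=
  proj1_sig (constructive_indefinite_description _ (F_ess_surj B)).

Lemma inv_ob_iso (B : D) :
  exists p : Hom (F (inv_ob B)) B * Hom B (F (inv_ob B)),
    Heq (comp (snd p) (fst p)) (idm _) /\ Heq (comp (fst p) (snd p)) (idm B).
Proof.
  destruct (proj2_sig (constructive_indefinite_description _ (F_ess_surj B)))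
    as (i & j & H). exists (i, j). exact H.
Qed.

Definition counit_pair (B : D) : Hom (F (inv_ob B)) B * Hom B (F (inv_ob B)) :=
  proj1_sig (constructive_indefinite_description _ (inv_ob_iso B)).

Definition counit (B : D) : Hom (F (inv_ob B)) B := fst (counit_pair B).
Definition counit_inv (B : D) : Hom B (F (inv_ob B)) := snd (counit_pair B).

Lemma counit_invK (B : D) : Heq (comp (counit_inv B) (counit B)) (idm _).
Proof. exact (proj1 (proj2_sig (constructive_indefinite_description _ (inv_ob_iso B)))). Qed.

Lemma counitK (B : D) : Heq (comp (counit B) (counit_inv B)) (idm B).
Proof. exact (proj2 (proj2_sig (constructive_indefinite_description _ (inv_ob_iso B)))). Qed.

Definition quasi_inverse : Functor D C.
Proof.
  refine {| fobj := inv_ob;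
            fmap := fun B B' h => preimage (comp (counit_inv B') (comp h (counit B))) |}.
  - intros B B' f g H. apply F_faithful. rewrite !fmap_preimage, H. reflexivity.
  - intros B. apply F_faithful.
    rewrite fmap_preimage, fmap_id, comp_idl, counit_invK. reflexivity.
  - intros B1 B2 B3 g f. apply F_faithful. rewrite fmap_comp, !fmap_preimage.
    rewrite !compA, <- (compA _ (counit B2) (counit_inv B2)), counitK, comp_idr.
    reflexivity.
Defined.

Lemma quasi_inverse_equivalence : CatEquivalent C D.
Proof.
  exists F, quasi_inverse. split; constructor.
  - refine (@Build_NatIso C C (CompF quasi_inverse F) (IdF C)
       (fun A => preimage (counit (F A))) (fun A => preimage (counit_inv (F A))) _ _ _).
    + intros A. apply F_faithful. simpl.
      rewrite fmap_comp, !fmap_preimage, fmap_id, counit_invK. reflexivity.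
    + intros A. apply F_faithful. simpl.
      rewrite fmap_comp, !fmap_preimage, fmap_id, counitK. reflexivity.
    + intros A B f. apply F_faithful. simpl.
      rewrite !fmap_comp, !fmap_preimage, !compA, counitK, comp_idl. reflexivity.
  - refine (@Build_NatIso D D (CompF F quasi_inverse) (IdF D) counit counit_inv _ _ _).
    + exact counit_invK.
    + exact counitK.
    + intros B B' h. simpl. rewrite fmap_preimage, !compA, counitK, comp_idl. reflexivity.
Qed.

End QuasiInverse.

Lemma NatIso_faithful (C D : Cat) (F : Functor C D) (F' : Functor D C)
  (eta : NatIso (CompF F' F) (IdF C)) : faithful F.
Proof.
  intros A B f g H.
  assert (E : forall h : Hom A B,
    Heq h (comp (ni_eta eta B) (comp (fmap F' (fmap F h)) (ni_inv eta A)))).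
  { intros h. rewrite compA. pose proof (ni_nat eta h) as N. simpl in N.
    rewrite N, <- compA. pose proof (ni_eta_inv eta A) as Q. simpl in Q.
    rewrite Q, comp_idr. reflexivity. }
  rewrite (E f), (E g), H. reflexivity.
Qed.

Lemma NatIso_full (C D : Cat) (F : Functor C D) (F' : Functor D C)
  (eta : NatIso (CompF F' F) (IdF C)) (eps : NatIso (CompF F F') (IdF D)) : full F.
Proof.
  intros A B h.
  set (f := comp (ni_eta eta B) (comp (fmap F' h) (ni_inv eta A))).
  exists f. apply (NatIso_faithful eps).
  pose proof (ni_nat eta f) as N. simpl in N.
  pose proof (ni_inv_eta eta B) as Q. simpl in Q.
  pose proof (ni_inv_eta eta A) as Q'. simpl in Q'.
  transitivity (comp (ni_inv eta B) (comp (ni_eta eta B) (fmap F' (fmap F f)))).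
  { rewrite compA, Q, comp_idl. reflexivity. }
  rewrite N. unfold f. rewrite <- !compA, Q', comp_idr, compA, Q, comp_idl. reflexivity.
Qed.

Lemma NatIso_ess_surj (C D : Cat) (F : Functor C D) (F' : Functor D C)
  (eps : NatIso (CompF F F') (IdF D)) : ess_surj F.
Proof.
  intros B. exists (F' B), (ni_eta eps B), (ni_inv eps B).
  split; [exact (ni_inv_eta eps B) | exact (ni_eta_inv eps B)].
Qed.

Lemma NatIso_ff_ess_surj (C D : Cat) (F : Functor C D) (F' : Functor D C)
  (eta : NatIso (CompF F' F) (IdF C)) (eps : NatIso (CompF F F') (IdF D)) : ff_ess_surj F.
Proof.
  split; [exact (NatIso_faithful eta) | split; [exact (NatIso_full eta eps) |]].
  exact (NatIso_ess_surj eps).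
Qed.

Lemma ff_ess_surj_CatEquivalent (C D : Cat) (F : Functor C D) :
  ff_ess_surj F -> CatEquivalent C D.
Proof.
  intros (F_faithful & F_full & F_ess_surj).
  exact (quasi_inverse_equivalence F_faithful F_full F_ess_surj).
Qed.

Lemma ff_ess_surj_comp (C D E : Cat) (F : Functor C D) (G : Functor D E) :
  ff_ess_surj F -> ff_ess_surj G -> ff_ess_surj (CompF G F).
Proof.
  intros (Fa & Fu & Fe) (Ga & Gu & Ge). split; [|split].
  - intros A B f g H. apply Fa, Ga, H.
  - intros A B h. destruct (Gu _ _ h) as [k Hk]. destruct (Fu _ _ k) as [f Hf].
    exists f. simpl. rewrite Hf. exact Hk.
  - intros Z. destruct (Ge Z) as [Y HY]. destruct (Fe Y) as [X HX].
    exists X. simpl. eapply isIso_trans; [apply isIso_fmap, HX | exact HY].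
Qed.

Lemma CatEquivalent_sym (C D : Cat) : CatEquivalent C D -> CatEquivalent D C.
Proof. intros (F & F' & H1 & H2). exists F', F. auto. Qed.

Lemma CatEquivalent_trans (C D E : Cat) :
  CatEquivalent C D -> CatEquivalent D E -> CatEquivalent C E.
Proof.
  intros (F & F' & [eta] & [eps]) (G & G' & [eta'] & [eps']).
  apply (ff_ess_surj_CatEquivalent (F := CompF G F)).
  exact (ff_ess_surj_comp (NatIso_ff_ess_surj eta eps) (NatIso_ff_ess_surj eta' eps')).
Qed.

(** * Shifts and graded functors *)

Section GroupFacts.
Variable G : Group.
Implicit Types a b c : G.

Lemma gmul_cancel_l a b c : gmul a b = gmul a c -> b = c.
Proof.
  intros H. rewrite <- (gmul1l b), <- (gmul1l c), <- (gmulVl a), <- !gmulA, H.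
  reflexivity.
Qed.

Lemma gmulKl a b : gmul (ginv a) (gmul a b) = b.
Proof. rewrite gmulA, gmulVl, gmul1l. reflexivity. Qed.

Lemma gmulKVl a b : gmul a (gmul (ginv a) b) = b.
Proof. rewrite gmulA, gmulVr, gmul1l. reflexivity. Qed.

Lemma gmulKr a b : gmul (gmul b a) (ginv a) = b.
Proof. rewrite <- gmulA, gmulVr, gmul1r. reflexivity. Qed.

Lemma gmulKVr a b : gmul (gmul b (ginv a)) a = b.
Proof. rewrite <- gmulA, gmulVl, gmul1r. reflexivity. Qed.

Lemma ginvM a b : ginv (gmul a b) = gmul (ginv b) (ginv a).
Proof.
  apply (gmul_cancel_l (a := gmul a b)).
  rewrite gmulVr, <- gmulA, gmulKVl, gmulVr. reflexivity.
Qed.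

Lemma ginv1 : ginv (@gone G) = gone.
Proof. rewrite <- (gmul1l (ginv gone)), gmulVr. reflexivity. Qed.

Lemma gidem_eq1 a : gmul a a = a -> a = gone.
Proof. intros H. apply (gmul_cancel_l (a := a)). rewrite gmul1r. exact H. Qed.

End GroupFacts.

Definition cast {A B : Type} (p : A = B) (a : A) : B :=
  match p in _ = B0 return B0 with eq_refl => a end.

Lemma cast_irrelevant {A B : Type} (p q : A = B) a : cast p a = cast q a.
Proof. rewrite (proof_irrelevance _ p q). reflexivity. Qed.

Lemma cast_id {A : Type} (p : A = A) a : cast p a = a.
Proof. rewrite (proof_irrelevance _ p eq_refl). reflexivity. Qed.

Lemma cast_cast {A B E : Type} (p : A = B) (q : B = E) a :
  cast q (cast p a) = cast (eq_trans p q) a.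
Proof. destruct q. reflexivity. Qed.

Lemma cast_castK {A B : Type} (p : A = B) (q : B = A) a : cast q (cast p a) = a.
Proof. rewrite cast_cast. apply cast_id. Qed.

Lemma cast_inj {A B : Type} (p : A = B) a b : cast p a = cast p b -> a = b.
Proof. destruct p. exact (fun H => H). Qed.

Section GradedActs.
Variables (G : Group) (S : GrSemigroup G).

Definition Car (X : FGrActOb S) : Type := act_car (gact (fg_act X)).

Definition app (X Y : FGrActOb S) (f : @Hom (FGrAct S) X Y) : Car X -> Car Y :=
  fun x => smap (gsmap (f : GrSMap X Y)) x.

Lemma app_Heq (X Y : FGrActOb S) (f g : @Hom (FGrAct S) X Y) :
  Heq f g -> forall x, app f x = app g x.
Proof. exact (fun H => H). Qed.

Lemma app_comp (X Y Z : FGrActOb S) (g : @Hom (FGrAct S) Y Z) (f : @Hom (FGrAct S) X Y) x :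
  app (@comp (FGrAct S) X Y Z g f) x = app g (app f x).
Proof. reflexivity. Qed.

Lemma app_cast (X X' Y Y' : FGrActOb S) (e1 : X = X') (e2 : Y = Y')
  (f : @Hom (FGrAct S) X Y) x :
  app (@hom_cast (FGrAct S) X X' Y Y' e1 e2 f) x =
  cast (f_equal Car e2) (app f (cast (f_equal Car (eq_sym e1)) x)).
Proof. destruct e1, e2. reflexivity. Qed.

Definition mkHom (X Y : FGrActOb S) (f : Car X -> Car Y)
  (f_act : forall (s : S) x, f (act s x) = act s (f x))
  (f_deg : forall a x, homog a x -> homog a (f x)) : @Hom (FGrAct S) X Y :=
  @Build_GrSMap G S X Y (@Build_SMap S X Y f f_act) f_deg.

Lemma FGrActOb_ext (X : SAct S) (d1 d2 : X -> G) dM1 dM2 c1 c2 :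
  (forall x, d1 x = d2 x) ->
  @Build_FGrActOb G S (@Build_GrSAct G S X d1 dM1) c1 =
  @Build_FGrActOb G S (@Build_GrSAct G S X d2 dM2) c2.
Proof.
  intros H. assert (E : d1 = d2) by (apply functional_extensionality; exact H).
  subst d2. rewrite (proof_irrelevance _ dM1 dM2). f_equal. apply proof_irrelevance.
Qed.

Lemma shiftOb_shiftOb (a b : G) (X : FGrActOb S) :
  shiftOb a (shiftOb b X) = shiftOb (gmul a b) X.
Proof.
  destruct X as [[X d dM] c]. apply FGrActOb_ext.
  intros x. simpl. rewrite ginvM, gmulA. reflexivity.
Qed.

Lemma shiftOb_one (X : FGrActOb S) : shiftOb gone X = X.
Proof.
  destruct X as [[X d dM] c]. apply FGrActOb_ext.
  intros x. simpl. rewrite ginv1, gmul1r. reflexivity.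
Qed.

Definition shift_compose (X : FGrActOb S) g h
  (pg : @Hom (FGrAct S) X (shiftOb g X)) (ph : @Hom (FGrAct S) X (shiftOb h X))
  : @Hom (FGrAct S) X (shiftOb (gmul g h) X) :=
  @hom_cast (FGrAct S) _ _ _ _ eq_refl (shiftOb_shiftOb g h X)
    (@comp (FGrAct S) _ _ _ (fmap (ShiftF S g) ph) pg).

Lemma app_shift_compose (X : FGrActOb S) g h
  (pg : @Hom (FGrAct S) X (shiftOb g X)) (ph : @Hom (FGrAct S) X (shiftOb h X)) x :
  app (shift_compose pg ph) x = app ph (app pg x).
Proof. unfold shift_compose. rewrite app_cast, cast_id. reflexivity. Qed.

Definition unshift_one (X : FGrActOb S) (p : @Hom (FGrAct S) X (shiftOb gone X))
  : @Hom (FGrAct S) X X :=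
  @hom_cast (FGrAct S) _ _ _ _ eq_refl (shiftOb_one X) p.

Lemma app_unshift_one (X : FGrActOb S) (p : @Hom (FGrAct S) X (shiftOb gone X)) x :
  app (unshift_one p) x = app p x.
Proof. unfold unshift_one. rewrite app_cast, cast_id. reflexivity. Qed.

End GradedActs.

Arguments Car {G S} X.
Arguments app {G S X Y} f x.

Lemma fmap_hom_cast (C D : Cat) (F : Functor C D) (X X' Y Y' : C)
  (e1 : X = X') (e2 : Y = Y') (f : Hom X Y) :
  fmap F (hom_cast e1 e2 f) = hom_cast (f_equal F e1) (f_equal F e2) (fmap F f).
Proof. destruct e1, e2. reflexivity. Qed.

Section GradedFunctor.
Variables (G : Group) (S T : GrSemigroup G) (F : Functor (FGrAct S) (FGrAct T)).

Lemma app_fmap_heq (X Y : FGrActOb S) (f g : @Hom (FGrAct S) X Y) y :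
  @Heq (FGrAct S) X Y f g -> app (fmap F f) y = app (fmap F g) y.
Proof. intros H. apply (fmap_heq F H). Qed.

Lemma app_fmap_comp (X Y Z : FGrActOb S) (g : @Hom (FGrAct S) Y Z)
  (f : @Hom (FGrAct S) X Y) y :
  app (fmap F (@comp (FGrAct S) X Y Z g f)) y = app (fmap F g) (app (fmap F f) y).
Proof. apply (fmap_comp F g f). Qed.

Lemma app_fmap_id (X : FGrActOb S) y : app (fmap F (@idm (FGrAct S) X)) y = y.
Proof. apply (fmap_id F X). Qed.

Hypothesis F_graded : graded_functor F.

Lemma fobj_shiftOb a (X : FGrActOb S) : F (shiftOb a X) = shiftOb a (F X).
Proof. destruct (F_graded a) as [e _]. exact (e X). Qed.

Lemma app_fmap_shift a (X Y : FGrActOb S) (f : @Hom (FGrAct S) X Y) w :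
  app (fmap F (fmap (ShiftF S a) f)) w =
  cast (f_equal Car (eq_sym (fobj_shiftOb a Y)))
    (app (fmap F f) (cast (f_equal Car (fobj_shiftOb a X)) w)).
Proof.
  destruct (F_graded a) as [e He].
  rewrite (cast_irrelevant (f_equal Car (fobj_shiftOb a X)) (f_equal Car (e X))),
    (cast_irrelevant _ (f_equal Car (eq_sym (e Y)))).
  assert (K : app (hom_cast (e X) (e Y) (fmap F (fmap (ShiftF S a) f)))
                (cast (f_equal Car (e X)) w)
              = app (fmap F f) (cast (f_equal Car (e X)) w)) by apply He.
  rewrite app_cast, cast_castK in K.
  apply (f_equal (cast (f_equal Car (eq_sym (e Y))))) in K.
  rewrite cast_castK in K. exact K.
Qed.

Definition fmap_shifted (X : FGrActOb S) g (p : @Hom (FGrAct S) X (shiftOb g X))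
  : @Hom (FGrAct T) (F X) (shiftOb g (F X)) :=
  @hom_cast (FGrAct T) _ _ _ _ eq_refl (fobj_shiftOb g X) (fmap F p).

Lemma app_fmap_shifted (X : FGrActOb S) g (p : @Hom (FGrAct S) X (shiftOb g X)) y :
  app (fmap_shifted p) y = cast (f_equal Car (fobj_shiftOb g X)) (app (fmap F p) y).
Proof. unfold fmap_shifted. rewrite app_cast. reflexivity. Qed.

Lemma fmap_shifted_comp (X : FGrActOb S) g h
  (pg : @Hom (FGrAct S) X (shiftOb g X)) (ph : @Hom (FGrAct S) X (shiftOb h X)) y :
  cast (f_equal Car (fobj_shiftOb (gmul g h) X)) (app (fmap F (shift_compose pg ph)) y)
  = app (fmap_shifted ph) (app (fmap_shifted pg) y).
Proof.
  unfold shift_compose.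
  rewrite fmap_hom_cast, app_cast, app_fmap_comp, app_fmap_shift, !app_fmap_shifted.
  rewrite !cast_cast. apply cast_irrelevant.
Qed.

Lemma fmap_shifted_mul (X : FGrActOb S) g h
  (pg : @Hom (FGrAct S) X (shiftOb g X)) (ph : @Hom (FGrAct S) X (shiftOb h X))
  (pgh : @Hom (FGrAct S) X (shiftOb (gmul g h) X)) :
  (forall x, app ph (app pg x) = app pgh x) ->
  forall y, app (fmap_shifted ph) (app (fmap_shifted pg) y) = app (fmap_shifted pgh) y.
Proof.
  intros Hc y. rewrite <- fmap_shifted_comp, app_fmap_shifted. f_equal.
  apply app_fmap_heq. intros x. exact (eq_trans (app_shift_compose pg ph x) (Hc x)).
Qed.

Lemma fmap_shifted_mul_reflect (X : FGrActOb S) g h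
  (pg : @Hom (FGrAct S) X (shiftOb g X)) (ph : @Hom (FGrAct S) X (shiftOb h X))
  (pgh : @Hom (FGrAct S) X (shiftOb (gmul g h) X)) :
  faithful F ->
  (forall y, app (fmap_shifted ph) (app (fmap_shifted pg) y) = app (fmap_shifted pgh) y) ->
  forall x, app ph (app pg x) = app pgh x.
Proof.
  intros F_faithful Hc x.
  assert (E : @Heq (FGrAct S) _ _ (shift_compose pg ph) pgh).
  { apply F_faithful. intros y.
    apply (@cast_inj _ _ (f_equal Car (fobj_shiftOb (gmul g h) X))).
    exact (eq_trans (fmap_shifted_comp pg ph y)
                    (eq_trans (Hc y) (app_fmap_shifted pgh y))). }
  rewrite <- app_shift_compose. exact (E x).
Qed.

Lemma fmap_shifted_one_cast (X : FGrActOb S) (p : @Hom (FGrAct S) X (shiftOb gone X)) y :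
  app (fmap F (unshift_one p)) y
  = cast (f_equal Car (shiftOb_one (F X))) (app (fmap_shifted p) y).
Proof.
  unfold unshift_one.
  rewrite fmap_hom_cast, app_cast, app_fmap_shifted, cast_cast. apply cast_irrelevant.
Qed.

Lemma fmap_shifted_one (X : FGrActOb S) (p : @Hom (FGrAct S) X (shiftOb gone X)) :
  (forall x, app p x = x) -> forall y, app (fmap_shifted p) y = y.
Proof.
  intros Hp y.
  assert (E : @Heq (FGrAct S) _ _ (unshift_one p) (@idm (FGrAct S) X))
    by exact (fun x => eq_trans (app_unshift_one p x) (Hp x)).
  pose proof (app_fmap_heq y E) as FE.
  rewrite fmap_shifted_one_cast, app_fmap_id in FE.
  rewrite <- FE at 2. symmetry. apply cast_id.
Qed.

Lemma fmap_shifted_one_reflect (X : FGrActOb S) (p : @Hom (FGrAct S) X (shiftOb gone X)) :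
  faithful F -> (forall y, app (fmap_shifted p) y = y) -> forall x, app p x = x.
Proof.
  intros F_faithful Hp x.
  assert (E : @Heq (FGrAct S) _ _ (unshift_one p) (@idm (FGrAct S) X)).
  { apply F_faithful. intros y.
    change (app (fmap F (unshift_one p)) y = app (fmap F (@idm (FGrAct S) X)) y).
    rewrite fmap_shifted_one_cast, app_fmap_id, Hp. apply cast_id. }
  rewrite <- app_unshift_one. exact (E x).
Qed.

Lemma app_fmap_shift_comp (X Y : FGrActOb S) g (m : @Hom (FGrAct S) X Y)
  (pX : @Hom (FGrAct S) X (shiftOb g X)) y :
  app (fmap F (@comp (FGrAct S) _ _ _ (fmap (ShiftF S g) m) pX)) y =
  cast (f_equal Car (eq_sym (fobj_shiftOb g Y)))
    (app (fmap F m) (app (fmap_shifted pX) y)).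
Proof. rewrite app_fmap_comp, app_fmap_shift, app_fmap_shifted. reflexivity. Qed.

Lemma app_fmap_comp_shifted (X Y : FGrActOb S) g (m : @Hom (FGrAct S) X Y)
  (pY : @Hom (FGrAct S) Y (shiftOb g Y)) y :
  app (fmap F (@comp (FGrAct S) _ _ _ pY m)) y =
  cast (f_equal Car (eq_sym (fobj_shiftOb g Y)))
    (app (fmap_shifted pY) (app (fmap F m) y)).
Proof. rewrite app_fmap_comp, app_fmap_shifted, cast_castK. reflexivity. Qed.

Lemma fmap_shifted_natural (X Y : FGrActOb S) g (m : @Hom (FGrAct S) X Y)
  (pX : @Hom (FGrAct S) X (shiftOb g X)) (pY : @Hom (FGrAct S) Y (shiftOb g Y)) :
  (forall x, app m (app pX x) = app pY (app m x)) ->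
  forall y, app (fmap F m) (app (fmap_shifted pX) y) =
            app (fmap_shifted pY) (app (fmap F m) y).
Proof.
  intros Hm y.
  assert (E : @Heq (FGrAct S) _ _
      (@comp (FGrAct S) _ _ _ (fmap (ShiftF S g) m) pX) (@comp (FGrAct S) _ _ _ pY m))
    by exact Hm.
  apply (@cast_inj _ _ (f_equal Car (eq_sym (fobj_shiftOb g Y)))).
  rewrite <- app_fmap_shift_comp, <- app_fmap_comp_shifted. exact (app_fmap_heq y E).
Qed.

Lemma fmap_shifted_natural_reflect (X Y : FGrActOb S) g (m : @Hom (FGrAct S) X Y)
  (pX : @Hom (FGrAct S) X (shiftOb g X)) (pY : @Hom (FGrAct S) Y (shiftOb g Y)) :
  faithful F ->
  (forall y, app (fmap F m) (app (fmap_shifted pX) y) =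
             app (fmap_shifted pY) (app (fmap F m) y)) ->
  forall x, app m (app pX x) = app pY (app m x).
Proof.
  intros F_faithful Hm.
  assert (E : @Heq (FGrAct S) _ _
      (@comp (FGrAct S) _ _ _ (fmap (ShiftF S g) m) pX) (@comp (FGrAct S) _ _ _ pY m)).
  { apply F_faithful. intros y.
    change (app (fmap F (@comp (FGrAct S) _ _ _ (fmap (ShiftF S g) m) pX)) y =
            app (fmap F (@comp (FGrAct S) _ _ _ pY m)) y).
    rewrite app_fmap_shift_comp, app_fmap_comp_shifted, Hm. reflexivity. }
  exact E.
Qed.

End GradedFunctor.

(** * Graded sets with shift isomorphisms *)

Record EqvOb (G : Group) (S : GrSemigroup G) := {
  eqv_ob :> FGrActOb S;
  eqv_shift : forall g : G, @Hom (FGrAct S) eqv_ob (shiftOb g eqv_ob);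
  eqv_shift_mul : forall g h (x : Car eqv_ob),
    app (eqv_shift h) (app (eqv_shift g) x) = app (eqv_shift (gmul g h)) x;
  eqv_shift_one : forall x : Car eqv_ob, app (eqv_shift gone) x = x }.

Record EqvHom (G : Group) (S : GrSemigroup G) (A B : EqvOb S) := {
  eqv_hom :> @Hom (FGrAct S) A B;
  eqv_hom_shift : forall g x,
    app eqv_hom (app (eqv_shift A g) x) = app (eqv_shift B g) (app eqv_hom x) }.

Definition EqvCat (G : Group) (S : GrSemigroup G) : Cat.
Proof.
  refine {| Ob := EqvOb S;
            Hom := fun A B => EqvHom A B;
            Heq := fun A B f g => forall x, app (eqv_hom f) x = app (eqv_hom g) x;
            idm := fun A => {| eqv_hom := @idm (FGrAct S) A;
                               eqv_hom_shift := fun g x => eq_refl |};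
            comp := fun A B C g f =>
              {| eqv_hom := @comp (FGrAct S) _ _ _ (eqv_hom g) (eqv_hom f);
                 eqv_hom_shift := fun g0 x =>
                   eq_trans (f_equal (app (eqv_hom g)) (eqv_hom_shift f g0 x))
                            (eqv_hom_shift g g0 (app f x)) |} |};
    intros; cbn [eqv_hom] in *; rewrite ?app_comp; try congruence; reflexivity.
Defined.

Section EqvLift.
Variables (G : Group) (S T : GrSemigroup G) (F : Functor (FGrAct S) (FGrAct T)).
Hypothesis F_graded : graded_functor F.

Definition EqvLift_ob (A : EqvOb S) : EqvOb T :=
  {| eqv_ob := F A;
     eqv_shift := fun g => fmap_shifted F_graded (eqv_shift A g);
     eqv_shift_mul := fun g h =>
       fmap_shifted_mul F_graded (@eqv_shift_mul _ _ A g h);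
     eqv_shift_one := fmap_shifted_one F_graded (@eqv_shift_one _ _ A) |}.

Definition EqvLift_hom (A B : EqvOb S) (m : EqvHom A B) :
  EqvHom (EqvLift_ob A) (EqvLift_ob B) :=
  @Build_EqvHom G T (EqvLift_ob A) (EqvLift_ob B) (fmap F m)
    (fun g => fmap_shifted_natural F_graded (eqv_hom_shift m g)).

Definition EqvLift : Functor (EqvCat S) (EqvCat T).
Proof.
  refine {| fobj := fun A : EqvCat S => (EqvLift_ob A : EqvCat T);
            fmap := fun (A B : EqvCat S) (m : Hom A B) =>
                      (EqvLift_hom m : @Hom (EqvCat T) _ _) |}.
  - intros A B f g Hfg y. apply app_fmap_heq. exact Hfg.
  - intros A y. apply app_fmap_id.
  - intros A B C g f y. apply app_fmap_comp.
Defined.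

Lemma EqvLift_faithful : faithful F -> faithful EqvLift.
Proof. intros F_faithful A B f g Hfg. exact (F_faithful _ _ (eqv_hom f) (eqv_hom g) Hfg). Qed.

Lemma EqvLift_full : faithful F -> full F -> full EqvLift.
Proof.
  intros F_faithful F_full A B m.
  destruct (F_full _ _ (eqv_hom m)) as [f Hf].
  assert (Hf' : forall y, app (fmap F f) y = app m y) by exact Hf.
  assert (f_shift : forall g x,
             app f (app (eqv_shift A g) x) = app (eqv_shift B g) (app f x)).
  { intros g. apply (fmap_shifted_natural_reflect (F_graded := F_graded)); [exact F_faithful|].
    intros y. rewrite !Hf'. exact (eqv_hom_shift m g y). }
  exists (@Build_EqvHom G S A B f f_shift). exact Hf'.
Qed.

(* The shift isomorphisms of B, conjugated by F A0 ~ B, are images under F of maps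
   A0 -> A0(g); faithfulness transfers the identities e_h o e_g = e_(gh) and e_1 = id to them. *)
Section PullBack.
Hypotheses (F_faithful : faithful F) (F_full : full F).
Variables (B : EqvOb T) (A0 : FGrActOb S).
Variables (i : @Hom (FGrAct T) (F A0) B) (j : @Hom (FGrAct T) B (F A0)).
Hypotheses (ji : forall y, app j (app i y) = y) (ij : forall y, app i (app j y) = y).

Definition pulled_shift g : @Hom (FGrAct S) A0 (shiftOb g A0) :=
  preimage F_full
    (@hom_cast (FGrAct T) _ _ _ _ eq_refl (eq_sym (fobj_shiftOb F_graded g A0))
       (@comp (FGrAct T) _ _ _ (fmap (ShiftF T g) j)
          (@comp (FGrAct T) _ _ _ (eqv_shift B g) i))).

Lemma app_fmap_shifted_pulled g y :
  app (fmap_shifted F_graded (pulled_shift g)) y = app j (app (eqv_shift B g) (app i y)).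
Proof.
  rewrite app_fmap_shifted. unfold pulled_shift.
  rewrite (app_Heq (fmap_preimage F_full _)), app_cast, cast_castK. reflexivity.
Qed.

Lemma pulled_shift_mul g h x :
  app (pulled_shift h) (app (pulled_shift g) x) = app (pulled_shift (gmul g h)) x.
Proof.
  apply (fmap_shifted_mul_reflect (F_graded := F_graded) F_faithful). intros y.
  rewrite !app_fmap_shifted_pulled, ij, eqv_shift_mul. reflexivity.
Qed.

Lemma pulled_shift_one x : app (pulled_shift gone) x = x.
Proof.
  apply (fmap_shifted_one_reflect (F_graded := F_graded) F_faithful). intros y.
  rewrite app_fmap_shifted_pulled, eqv_shift_one. apply ji.
Qed.

Definition PulledEqvOb : EqvOb S := Build_EqvOb pulled_shift_mul pulled_shift_one.

Lemma pulled_iso_shift g y :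
  app i (app (eqv_shift (EqvLift_ob PulledEqvOb) g) y) = app (eqv_shift B g) (app i y).
Proof. cbn. rewrite app_fmap_shifted_pulled, ij. reflexivity. Qed.

Lemma pulled_iso_inv_shift g z :
  app j (app (eqv_shift B g) z) = app (eqv_shift (EqvLift_ob PulledEqvOb) g) (app j z).
Proof. cbn. rewrite app_fmap_shifted_pulled, ij. reflexivity. Qed.

Definition pulled_iso : EqvHom (EqvLift_ob PulledEqvOb) B :=
  @Build_EqvHom G T (EqvLift_ob PulledEqvOb) B i pulled_iso_shift.

Definition pulled_iso_inv : EqvHom B (EqvLift_ob PulledEqvOb) :=
  @Build_EqvHom G T B (EqvLift_ob PulledEqvOb) j pulled_iso_inv_shift.

End PullBack.

Lemma EqvLift_ess_surj : faithful F -> full F -> ess_surj F -> ess_surj EqvLift.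
Proof.
  intros F_faithful F_full F_ess_surj B.
  destruct (F_ess_surj B) as [A0 (i & j & ji & ij)].
  exists (PulledEqvOb F_faithful F_full ji ij).
  exists (pulled_iso F_faithful F_full ji ij), (pulled_iso_inv F_faithful F_full ji ij).
  split; intros y; [exact (ji y) | exact (ij y)].
Qed.

Lemma EqvLift_ff_ess_surj : ff_ess_surj F -> ff_ess_surj EqvLift.
Proof.
  intros (F_faithful & F_full & F_ess_surj). split; [|split].
  - exact (EqvLift_faithful F_faithful).
  - exact (EqvLift_full F_faithful F_full).
  - exact (EqvLift_ess_surj F_faithful F_full F_ess_surj).
Qed.

End EqvLift.

(** * The graded S-set induced by an S-set *)

Section TaggedPairs.
Variables (G : Group) (X : Type) (z : X).

(* Pairs (x, g) with x <> z, together with a single point over z: a model of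
   (X \ {z}) x G with a base point added. *)
Definition tagged : Type := {p : X * G | fst p = z -> snd p = gone}.

Definition tag (x : X) (g : G) : tagged :=
  match excluded_middle_informative (x = z) with
  | left _ => exist (fun p : X * G => fst p = z -> snd p = gone) (z, gone) (fun _ => eq_refl)
  | right x_neq => exist (fun p : X * G => fst p = z -> snd p = gone) (x, g)
                     (fun E => False_rect _ (x_neq E))
  end.

Definition tval (t : tagged) : X := fst (proj1_sig t).
Definition tdeg (t : tagged) : G := snd (proj1_sig t).
Definition tnull : tagged := tag z gone.

Lemma tagged_ext (t u : tagged) : tval t = tval u -> tdeg t = tdeg u -> t = u.
Proof.
  destruct t as [[x g] pt], u as [[y h] pu]. unfold tval, tdeg. simpl. intros -> ->.
  f_equal. apply proof_irrelevance.
Qed.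

Lemma tval_tag x g : tval (tag x g) = x.
Proof. unfold tag, tval. destruct excluded_middle_informative; simpl; auto. Qed.

Lemma tdeg_tag x g : x <> z -> tdeg (tag x g) = g.
Proof. unfold tag, tdeg. destruct excluded_middle_informative; simpl; tauto. Qed.

Lemma tval_tnull : tval tnull = z.
Proof. apply tval_tag. Qed.

Lemma tdeg_tnull : tdeg tnull = gone.
Proof. unfold tnull, tag, tdeg. destruct excluded_middle_informative; simpl; tauto. Qed.

Lemma tagged_null (t : tagged) : tval t = z -> t = tnull.
Proof.
  intros H. apply tagged_ext.
  - rewrite tval_tnull. exact H.
  - rewrite tdeg_tnull. destruct t as [[x g] pt]. unfold tval, tdeg in *. simpl in *. auto.
Qed.

Lemma tag_null x g : x = z -> tag x g = tnull.
Proof. intros H. apply tagged_null. rewrite tval_tag. exact H. Qed.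

Lemma tag_eta (t : tagged) : tag (tval t) (tdeg t) = t.
Proof.
  destruct (excluded_middle_informative (tval t = z)) as [H|H].
  - rewrite tag_null by exact H. symmetry. apply tagged_null, H.
  - apply tagged_ext. apply tval_tag. apply tdeg_tag, H.
Qed.

End TaggedPairs.

Arguments tag {G X z} x g.
Arguments tnull {G X z}.

Section SActFacts.
Variables (S : SemigroupZ) (X : SAct S).

Lemma act_at_zero (s : S) : act s (@act_zero S X) = act_zero.
Proof. rewrite <- (act0 (@act_zero S X)) at 1. rewrite <- actA, smul0r, act0. reflexivity. Qed.

Lemma act_neq0_l (s : S) (x : X) : act s x <> act_zero -> s <> szero.
Proof. intros H E. apply H. rewrite E. apply act0. Qed.

Lemma act_neq0_r (s : S) (x : X) : act s x <> act_zero -> x <> act_zero.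
Proof. intros H E. apply H. rewrite E. apply act_at_zero. Qed.

Lemma tens_equiv_act (p q : S * X) :
  tens_equiv p q -> act (fst p) (snd p) = act (fst q) (snd q).
Proof.
  induction 1 as [p q [s [t [x [-> ->]]]] | | |]; simpl; try congruence.
  apply actA.
Qed.

Lemma smap_zero (Y : SAct S) (f : SMap X Y) : f act_zero = act_zero.
Proof. rewrite <- (act0 (@act_zero S X)), smap_act, act0. reflexivity. Qed.

End SActFacts.

Section InducedAct.
Variables (G : Group) (S : GrSemigroup G) (X : SAct S).

Definition IndCar : Type := tagged G (@act_zero S X).

Definition ind_act (s : S) (t : IndCar) : IndCar :=
  tag (act s (tval t)) (gmul (gs_deg s) (tdeg t)).

Lemma tval_ind_act (s : S) (t : IndCar) : tval (ind_act s t) = act s (tval t).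
Proof. apply tval_tag. Qed.

Lemma tdeg_ind_act (s : S) (t : IndCar) :
  act s (tval t) <> act_zero -> tdeg (ind_act s t) = gmul (gs_deg s) (tdeg t).
Proof. apply tdeg_tag. Qed.

Lemma ind_actA (s t : S) (x : IndCar) : ind_act (smul s t) x = ind_act s (ind_act t x).
Proof.
  unfold ind_act. rewrite tval_tag.
  destruct (excluded_middle_informative (act s (act t (tval x)) = act_zero)) as [H|H].
  - rewrite !tag_null; auto. rewrite actA. exact H.
  - rewrite tdeg_tag by exact (act_neq0_r H). f_equal.
    + apply actA.
    + rewrite gs_degM by (rewrite <- actA in H; exact (act_neq0_l H)). symmetry. apply gmulA.
Qed.

Lemma ind_act0 (x : IndCar) : ind_act szero x = tnull.
Proof. apply tag_null, act0. Qed.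

Lemma ind_act_unital (x : IndCar) : exists (s : S) (y : IndCar), ind_act s y = x.
Proof.
  destruct (excluded_middle_informative (tval x = act_zero)) as [H|H].
  - exists szero, x. rewrite ind_act0. symmetry. apply tagged_null, H.
  - destruct (act_unital (tval x)) as [s [y Hy]].
    exists s, (tag y (gmul (ginv (gs_deg s)) (tdeg x))).
    transitivity (tag (z := act_zero) (tval x) (tdeg x)); [unfold ind_act; f_equal|apply tag_eta].
    + rewrite tval_tag. exact Hy.
    + rewrite tdeg_tag, gmulKVl; [reflexivity|].
      intros E. apply H. rewrite <- Hy, E. apply act_at_zero.
Qed.

Definition IndSAct : SAct S :=
  {| act_car := IndCar; act_zero := tnull; act := ind_act;
     actA := ind_actA; act0 := ind_act0; act_unital := ind_act_unital |}.

Lemma ind_act_degM (s : S) (x : IndSAct) :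
  act s x <> act_zero -> tdeg (act s x) = gmul (gs_deg s) (tdeg x).
Proof.
  intros H. apply tdeg_ind_act. intros E. apply H.
  apply tagged_null. rewrite tval_ind_act. exact E.
Qed.

Definition IndGrSAct : GrSAct S :=
  {| gact := IndSAct; gact_deg := fun x : IndSAct => tdeg x; gact_degM := ind_act_degM |}.

Definition lies_over (p : S * X) (q : S * IndSAct) : Prop :=
  fst q = fst p /\ tval (snd q) = snd p.

Lemma tens_step_lift (p q : S * X) :
  tens_step p q ->
  (forall p', lies_over p p' -> exists q', lies_over q q' /\ tens_step p' q') /\
  (forall q', lies_over q q' -> exists p', lies_over p p' /\ tens_step p' q').
Proof.
  intros [s [t [x [-> ->]]]]. split.
  - intros [s0 x0] [H1 H2]. simpl in *. subst.
    exists (s, ind_act t x0). split.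
    + split; simpl; [reflexivity | apply tval_ind_act].
    + exists s, t, x0. auto.
  - intros [s0 y0] [H1 H2]. simpl in *. subst.
    set (x0 := tag x (gmul (ginv (gs_deg t)) (tdeg y0)) : IndSAct).
    exists (smul s t, x0). split.
    + split; simpl; [reflexivity | apply tval_tag].
    + exists s, t, x0. split; [reflexivity|]. f_equal. simpl. unfold ind_act, x0.
      rewrite tval_tag.
      destruct (excluded_middle_informative (act t x = act_zero)) as [H|H].
      * rewrite tag_null by exact H. apply tagged_null. rewrite H2. exact H.
      * rewrite tdeg_tag by exact (act_neq0_r H).
        rewrite gmulKVl, <- H2. symmetry. apply tag_eta.
Qed.

Lemma tens_equiv_lift (p q : S * X) :
  tens_equiv p q ->
  (forall p', lies_over p p' -> exists q', lies_over q q' /\ tens_equiv p' q') /\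
  (forall q', lies_over q q' -> exists p', lies_over p p' /\ tens_equiv p' q').
Proof.
  induction 1 as [p q Hs | p | p q _ [IH1 IH2] | p q r _ [IH1 IH2] _ [IH3 IH4]].
  - destruct (tens_step_lift Hs) as [Hf Hb]. split.
    + intros p' Hp. destruct (Hf p' Hp) as [q' [H1 H2]].
      exists q'. split; [exact H1 | apply rst_step, H2].
    + intros q' Hq. destruct (Hb q' Hq) as [p' [H1 H2]].
      exists p'. split; [exact H1 | apply rst_step, H2].
  - split; intros p' H; exists p'; split; auto; apply rst_refl.
  - split.
    + intros p' H. destruct (IH2 p' H) as [q' [H1 H2]].
      exists q'. split; [exact H1 | apply rst_sym, H2].
    + intros q' H. destruct (IH1 q' H) as [p' [H1 H2]].
      exists p'. split; [exact H1 | apply rst_sym, H2].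
  - split.
    + intros p' H. destruct (IH1 p' H) as [q' [H1 H2]].
      destruct (IH3 q' H1) as [r' [H3 H4]].
      exists r'. split; [exact H3 | eapply rst_trans; eauto].
    + intros r' H. destruct (IH4 r' H) as [q' [H1 H2]].
      destruct (IH2 q' H1) as [p' [H3 H4]].
      exists p'. split; [exact H3 | eapply rst_trans; eauto].
Qed.

Section Closed.
Hypothesis X_closed : closed_act X.

Lemma tens_equiv_lift_from (s : S) (x : IndSAct) (q : S * X) :
  act s (tval x) = act (fst q) (snd q) ->
  exists q', lies_over q q' /\ tens_equiv (s, x) q'.
Proof.
  intros H. apply (proj1 (tens_equiv_lift (proj2 X_closed (s, tval x) q H))).
  split; reflexivity.
Qed.

Lemma tens_equiv_null (s : S) (x : IndSAct) :
  act s x = act_zero -> tens_equiv (s, x) (szero, act_zero).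
Proof.
  intros H.
  destruct (@tens_equiv_lift_from s x (szero, act_zero)) as [[s' x'] [[H1 H2] H3]].
  - simpl. rewrite act0, <- tval_ind_act. change (tval (act s x) = act_zero).
    rewrite H. apply tval_tnull.
  - simpl in *. subst. rewrite (tagged_null H2) in H3. exact H3.
Qed.

Lemma IndSAct_closed : closed_act IndSAct.
Proof.
  split.
  - intros x. destruct (ind_act_unital x) as [s [y H]]. exists (s, y). exact H.
  - intros [s x] [s' x'] H. simpl in H.
    destruct (excluded_middle_informative (act s x = act_zero)) as [E|E].
    + eapply rst_trans; [apply (tens_equiv_null E)|].
      apply rst_sym, tens_equiv_null. simpl. rewrite <- H. exact E.
    + destruct (@tens_equiv_lift_from s x (s', tval x')) as [[s2 x2] [[H1 H2] H3]].
      { simpl. rewrite <- !tval_ind_act, H. reflexivity. }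
      simpl in *. subst s2.
      assert (V := tens_equiv_act H3). simpl in V.
      replace x' with x2; [exact H3|].
      apply tagged_ext; [exact H2|].
      apply (gmul_cancel_l (a := gs_deg s')).
      rewrite <- !ind_act_degM by (simpl in *; congruence).
      simpl in *. congruence.
Qed.

End Closed.

End InducedAct.

Section IndMap.
Variables (G : Group) (S : GrSemigroup G).

Definition ind_map (X Y : SAct S) (h : X -> Y) (k : G -> G) (t : IndCar X) : IndCar Y :=
  tag (h (tval t)) (k (tdeg t)).

Lemma ind_map_ext (X Y : SAct S) (h h' : X -> Y) (k k' : G -> G) (t : IndCar X) :
  (forall x, h x = h' x) -> (forall g, k g = k' g) -> ind_map h k t = ind_map h' k' t.
Proof. intros Hh Hk. unfold ind_map. rewrite Hh, Hk. reflexivity. Qed.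

Lemma ind_map_id (X : SAct S) (t : IndCar X) : ind_map (fun x => x) (fun g => g) t = t.
Proof. apply tag_eta. Qed.

Lemma ind_map_comp (X Y Z : SAct S) (h : X -> Y) (h' : Y -> Z) (k k' : G -> G)
  (t : IndCar X) :
  h' act_zero = act_zero ->
  ind_map h' k' (ind_map h k t) = ind_map (fun x => h' (h x)) (fun g => k' (k g)) t.
Proof.
  intros h'0. unfold ind_map. rewrite tval_tag.
  destruct (excluded_middle_informative (h (tval t) = act_zero)) as [E|E].
  - rewrite !tag_null; try reflexivity; rewrite E; exact h'0.
  - rewrite tdeg_tag by exact E. reflexivity.
Qed.

Lemma ind_map_act (X Y : SAct S) (h : X -> Y) (k : G -> G) :
  (forall (s : S) x, h (act s x) = act s (h x)) -> h act_zero = act_zero ->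
  (forall (s : S) g, k (gmul (gs_deg s) g) = gmul (gs_deg s) (k g)) ->
  forall (s : S) (t : IndCar X), ind_map h k (ind_act s t) = ind_act s (ind_map h k t).
Proof.
  intros h_act h0 k_equiv s t. unfold ind_map, ind_act. rewrite !tval_tag.
  destruct (excluded_middle_informative (act s (tval t) = act_zero)) as [E|E].
  - rewrite E, h0, tag_null by reflexivity. symmetry. apply tag_null. rewrite <- h_act, E. exact h0.
  - rewrite tdeg_tag by exact E.
    destruct (excluded_middle_informative (h (tval t) = act_zero)) as [E2|E2].
    + rewrite !tag_null; [reflexivity | | ]; rewrite ?h_act, E2; apply act_at_zero.
    + rewrite tdeg_tag by exact E2. rewrite h_act, k_equiv. reflexivity.
Qed.

Lemma ind_map_tag (X Y : SAct S) (h : X -> Y) (k : G -> G) (x : X) g :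
  h act_zero = act_zero -> ind_map h k (tag (z := act_zero) x g) = tag (h x) (k g).
Proof.
  intros h0. unfold ind_map. rewrite tval_tag.
  destruct (excluded_middle_informative (x = act_zero)) as [E|E].
  - rewrite !tag_null; try reflexivity; rewrite E; exact h0.
  - rewrite tdeg_tag by exact E. reflexivity.
Qed.

Lemma ind_act_tag (X : SAct S) (s : S) (x : X) g :
  ind_act s (tag (z := act_zero) x g) = tag (act s x) (gmul (gs_deg s) g).
Proof.
  unfold ind_act. rewrite tval_tag.
  destruct (excluded_middle_informative (x = act_zero)) as [E|E].
  - rewrite !tag_null; [reflexivity | |]; rewrite E; apply act_at_zero.
  - rewrite tdeg_tag by exact E. reflexivity.
Qed.

End IndMap.

Section IndFunctor.
Variables (G : Group) (S : GrSemigroup G).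

Definition IndOb (X : FActOb S) : FGrActOb S :=
  {| fg_act := IndGrSAct X; fg_closed := IndSAct_closed (fa_closed X) |}.

Lemma ind_shift_deg (X : FActOb S) g a (t : IndOb X) :
  homog a t ->
  @homog G S (shift_gr g (IndGrSAct X)) a (ind_map (fun x => x) (fun h => gmul h g) t).
Proof.
  intros [H|H]; unfold homog, ind_map in *; simpl in *.
  - left. apply tag_null. rewrite H. apply tval_tnull.
  - destruct (excluded_middle_informative (tval t = act_zero)) as [E|E].
    + left. apply tag_null, E.
    + right. rewrite tdeg_tag by exact E. rewrite H. apply gmulKr.
Qed.

Definition ind_shift (X : FActOb S) g : @Hom (FGrAct S) (IndOb X) (shiftOb g (IndOb X)) :=
  @mkHom G S (IndOb X) (shiftOb g (IndOb X)) (ind_map (fun x => x) (fun h => gmul h g))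
    (ind_map_act (fun _ _ => eq_refl) eq_refl (fun s h => eq_sym (gmulA (gs_deg s) h g)))
    (@ind_shift_deg X g).

Lemma ind_shift_mul (X : FActOb S) g h (t : Car (IndOb X)) :
  app (ind_shift X h) (app (ind_shift X g) t) = app (ind_shift X (gmul g h)) t.
Proof.
  unfold app. simpl. rewrite ind_map_comp by reflexivity.
  apply ind_map_ext; [reflexivity | intros k; symmetry; apply gmulA].
Qed.

Lemma ind_shift_one (X : FActOb S) (t : Car (IndOb X)) : app (ind_shift X gone) t = t.
Proof.
  unfold app. simpl. rewrite <- (ind_map_id t) at 2.
  apply ind_map_ext; [reflexivity | apply gmul1r].
Qed.

Definition IndEqvOb (X : FActOb S) : EqvOb S :=
  Build_EqvOb (@ind_shift_mul X) (@ind_shift_one X).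

Lemma ind_fmap_deg (X Y : FActOb S) (f : SMap X Y) a (t : IndOb X) :
  homog a t -> @homog G S (IndOb Y) a (ind_map f (fun g => g) t).
Proof.
  intros [H|H]; unfold homog, ind_map in *; simpl in *.
  - left. apply tag_null. rewrite H, tval_tnull. apply smap_zero.
  - destruct (excluded_middle_informative (f (tval t) = act_zero)) as [E|E].
    + left. apply tag_null, E.
    + right. rewrite tdeg_tag by exact E. exact H.
Qed.

Definition ind_fmap (X Y : FActOb S) (f : SMap X Y) : @Hom (FGrAct S) (IndOb X) (IndOb Y) :=
  @mkHom G S (IndOb X) (IndOb Y) (ind_map f (fun g => g))
    (ind_map_act (smap_act f) (smap_zero f) (fun _ _ => eq_refl)) (@ind_fmap_deg X Y f).

Lemma ind_fmap_shift (X Y : FActOb S) (f : SMap X Y) g (t : Car (IndOb X)) :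
  app (ind_fmap f) (app (ind_shift X g) t) = app (ind_shift Y g) (app (ind_fmap f) t).
Proof.
  unfold app. simpl. rewrite !ind_map_comp by (reflexivity || apply smap_zero).
  reflexivity.
Qed.

Definition Ind : Functor (FAct S) (EqvCat S).
Proof.
  refine {| fobj := fun X : FAct S => (IndEqvOb X : EqvCat S);
            fmap := fun (X Y : FAct S) (f : Hom X Y) =>
              (@Build_EqvHom G S (IndEqvOb X) (IndEqvOb Y) (ind_fmap f) (ind_fmap_shift f)
                 : @Hom (EqvCat S) _ _) |}.
  - intros X Y f g H t. apply ind_map_ext; [exact H | reflexivity].
  - intros X t. apply ind_map_id.
  - intros X Y Z g f t. symmetry. apply ind_map_comp, smap_zero.
Defined.

End IndFunctor.

Section IndFull.
Variables (G : Group) (S : GrSemigroup G).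

Lemma ind_shift_tag (X : FActOb S) (x : X) g :
  app (ind_shift X g) (tag (z := act_zero) x gone) = tag x g.
Proof.
  unfold app. simpl. rewrite ind_map_tag by reflexivity. rewrite gmul1l. reflexivity.
Qed.

Lemma Ind_faithful : faithful (Ind S).
Proof.
  intros X Y f g H x.
  destruct (excluded_middle_informative (x = act_zero)) as [E|E].
  - subst. rewrite !smap_zero. reflexivity.
  - pose proof (f_equal (@tval _ _ _) (H (tag x gone))) as K.
    unfold app in K. simpl in K. unfold ind_map in K. rewrite !tval_tag in K. exact K.
Qed.

Variables (X Y : FActOb S) (m : EqvHom (IndEqvOb X) (IndEqvOb Y)).

Lemma app_ind_shift_comm g t :
  app m (app (ind_shift X g) t) = app (ind_shift Y g) (app m t).
Proof. exact (eqv_hom_shift m g t). Qed.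

Lemma app_ind_act_comm (s : S) t : app m (ind_act s t) = ind_act s (app m t).
Proof. exact (smap_act (gsmap (eqv_hom m)) s t). Qed.

Definition underlying (x : X) : Y := tval (app m (tag x gone)).

Lemma tval_app_tag (x : X) g : tval (app m (tag x g)) = underlying x.
Proof.
  unfold underlying. rewrite <- (ind_shift_tag x g), app_ind_shift_comm.
  apply tval_tag.
Qed.

Lemma underlying_act (s : S) (x : X) : underlying (act s x) = act s (underlying x).
Proof.
  rewrite <- (tval_app_tag _ (gmul (gs_deg s) gone)), <- ind_act_tag, app_ind_act_comm.
  apply tval_ind_act.
Qed.

Lemma app_tag_one (x : X) : app m (tag x gone) = tag (underlying x) gone.
Proof.
  assert (Hx : @homog G S (IndOb X) gone (tag x gone)).
  { destruct (excluded_middle_informative (x = act_zero)) as [E|E].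
    - left. apply tag_null, E.
    - right. apply tdeg_tag, E. }
  unfold underlying. destruct (gsmap_deg (eqv_hom m) Hx) as [H|H].
  - change (app m (tag x gone) = tnull) in H.
    rewrite H, tval_tnull. symmetry. apply tag_null. reflexivity.
  - change (tdeg (app m (tag x gone)) = gone) in H.
    rewrite <- (tag_eta (app m (tag x gone))) at 1. rewrite H. reflexivity.
Qed.

Lemma app_tag (x : X) g : app m (tag x g) = tag (underlying x) g.
Proof.
  rewrite <- (ind_shift_tag x g), app_ind_shift_comm, app_tag_one. apply ind_shift_tag.
Qed.

Definition underlying_smap : SMap X Y := Build_SMap underlying_act.

End IndFull.

Lemma Ind_full (G : Group) (S : GrSemigroup G) : full (Ind S).
Proof.
  intros X Y m. exists (underlying_smap m). intros t.
  change (app (ind_fmap (underlying_smap m)) t = app m t).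
  rewrite <- (tag_eta t). generalize (tval t) (tdeg t). intros x g.
  transitivity (tag (z := act_zero) (underlying m x) g); [|symmetry; apply app_tag].
  apply ind_map_tag, (smap_zero (underlying_smap m)).
Qed.

(** * The degree-one component *)

Section DegreeOne.
Variables (G : Group) (S : GrSemigroup G) (A : EqvOb S).

Definition ezero : Car A := @act_zero S (gact (fg_act A)).
Definition eact (s : S) (x : Car A) : Car A := @act S (gact (fg_act A)) s x.
Definition edeg (x : Car A) : G := @gact_deg G S (fg_act A) x.
Definition eshift (g : G) (x : Car A) : Car A := app (eqv_shift A g) x.

Lemma eact_zero (s : S) : eact s ezero = ezero.
Proof. apply act_at_zero. Qed.

Lemma eact0 (x : Car A) : eact szero x = ezero.
Proof. apply act0. Qed.

Lemma eact_deg (s : S) (x : Car A) :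
  eact s x <> ezero -> edeg (eact s x) = gmul (gs_deg s) (edeg x).
Proof. apply gact_degM. Qed.

Lemma eshift_zero g : eshift g ezero = ezero.
Proof. apply (smap_zero (gsmap (eqv_shift A g))). Qed.

Lemma eshift_act g (s : S) (x : Car A) : eshift g (eact s x) = eact s (eshift g x).
Proof. apply (smap_act (gsmap (eqv_shift A g))). Qed.

Lemma eshift_mul g h (x : Car A) : eshift h (eshift g x) = eshift (gmul g h) x.
Proof. apply eqv_shift_mul. Qed.

Lemma eshift_one (x : Car A) : eshift gone x = x.
Proof. apply eqv_shift_one. Qed.

Lemma eshift_inj g (x y : Car A) : eshift g x = eshift g y -> x = y.
Proof.
  intros H. apply (f_equal (eshift (ginv g))) in H.
  rewrite !eshift_mul, gmulVr, !eshift_one in H. exact H.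
Qed.

Lemma eshift_eq0 g (x : Car A) : eshift g x = ezero -> x = ezero.
Proof. intros H. apply (@eshift_inj g). rewrite H, eshift_zero. reflexivity. Qed.

Lemma eshift_deg g (x : Car A) : x <> ezero -> edeg (eshift g x) = gmul (edeg x) g.
Proof.
  intros H.
  destruct (gsmap_deg (eqv_shift A g) (a := edeg x) (x := x) (or_intror eq_refl)) as [E|E].
  - exfalso. exact (H (eshift_eq0 E)).
  - change (gmul (edeg (eshift g x)) (ginv g) = edeg x) in E.
    rewrite <- E. symmetry. apply gmulKVr.
Qed.

Definition DegOne : Type := {x : Car A | homog gone x}.

Lemma DegOne_ext (a b : DegOne) : proj1_sig a = proj1_sig b -> a = b.
Proof.
  destruct a as [a pa], b as [b pb]. simpl. intros ->. f_equal. apply proof_irrelevance.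
Qed.

Definition deg_one_zero : DegOne := exist _ ezero (or_introl eq_refl).

Lemma to_deg_one_homog (y : Car A) : homog gone (eshift (ginv (edeg y)) y).
Proof.
  destruct (excluded_middle_informative (y = ezero)) as [E|E].
  - left. rewrite E. apply eshift_zero.
  - right. change (edeg (eshift (ginv (edeg y)) y) = gone).
    rewrite eshift_deg by exact E. apply gmulVr.
Qed.

Definition to_deg_one (y : Car A) : DegOne := exist _ _ (to_deg_one_homog y).

Lemma to_deg_one_zero : to_deg_one ezero = deg_one_zero.
Proof. apply DegOne_ext. apply eshift_zero. Qed.

Lemma to_deg_one_eq0 (y : Car A) : to_deg_one y = deg_one_zero -> y = ezero.
Proof. intros H. apply (f_equal (@proj1_sig _ _)) in H. exact (eshift_eq0 H). Qed.

Lemma to_deg_one_val (a : DegOne) : to_deg_one (proj1_sig a) = a.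
Proof.
  apply DegOne_ext. simpl. destruct (proj2_sig a) as [E|E].
  - rewrite E. apply eshift_zero.
  - change (edeg (proj1_sig a) = gone) in E. rewrite E, ginv1. apply eshift_one.
Qed.

Lemma to_deg_one_shift g (y : Car A) : to_deg_one (eshift g y) = to_deg_one y.
Proof.
  apply DegOne_ext. simpl.
  destruct (excluded_middle_informative (y = ezero)) as [E|E].
  - rewrite E, !eshift_zero. reflexivity.
  - rewrite eshift_deg, eshift_mul, ginvM, gmulKVl by exact E. reflexivity.
Qed.

Lemma deg_one_deg (a : DegOne) : proj1_sig a <> ezero -> edeg (proj1_sig a) = gone.
Proof. intros H. destruct (proj2_sig a) as [E|E]; [contradiction | exact E]. Qed.

Definition deg_one_act (s : S) (a : DegOne) : DegOne := to_deg_one (eact s (proj1_sig a)).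

Lemma val_deg_one_act (s : S) (a : DegOne) :
  eact s (proj1_sig a) <> ezero ->
  proj1_sig (deg_one_act s a) = eshift (ginv (gs_deg s)) (eact s (proj1_sig a)).
Proof.
  intros H. simpl. rewrite eact_deg, deg_one_deg, gmul1r by
    (try exact H; intros E; apply H; rewrite E; apply eact_zero).
  reflexivity.
Qed.

Lemma deg_one_act_to_deg_one (s : S) (y : Car A) :
  deg_one_act s (to_deg_one y) = to_deg_one (eact s y).
Proof. unfold deg_one_act. simpl. rewrite <- eshift_act. apply to_deg_one_shift. Qed.

Lemma deg_one_actA (s t : S) (a : DegOne) :
  deg_one_act (smul s t) a = deg_one_act s (deg_one_act t a).
Proof.
  unfold deg_one_act at 3. rewrite deg_one_act_to_deg_one.
  unfold deg_one_act, eact. rewrite actA. reflexivity.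
Qed.

Lemma deg_one_act0 (a : DegOne) : deg_one_act szero a = deg_one_zero.
Proof. unfold deg_one_act. rewrite eact0. apply to_deg_one_zero. Qed.

Lemma deg_one_act_unital (a : DegOne) : exists (s : S) (b : DegOne), deg_one_act s b = a.
Proof.
  destruct (act_unital (proj1_sig a)) as [s [y Hy]].
  exists s, (to_deg_one y). rewrite deg_one_act_to_deg_one.
  change (to_deg_one (act s y) = a). rewrite Hy. apply to_deg_one_val.
Qed.

Definition DegOneSAct : SAct S :=
  {| act_car := DegOne; act_zero := deg_one_zero; act := deg_one_act;
     actA := deg_one_actA; act0 := deg_one_act0; act_unital := deg_one_act_unital |}.

End DegreeOne.

Arguments ezero {G S A}.
Arguments deg_one_zero {G S A}.

Section DegreeOneClosed.
Variables (G : Group) (S : GrSemigroup G) (A : EqvOb S).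
Hypothesis S_local_units : has_local_units S.

Lemma tens_equiv_to_deg_one (p q : S * Car A) :
  @tens_equiv S (gact (fg_act A)) p q ->
  @tens_equiv S (DegOneSAct A) (fst p, to_deg_one (snd p)) (fst q, to_deg_one (snd q)).
Proof.
  induction 1 as [p q [s [t [x [-> ->]]]] | | |].
  - apply rst_step. exists s, t, (to_deg_one x). split; [reflexivity|].
    simpl. rewrite deg_one_act_to_deg_one. reflexivity.
  - apply rst_refl.
  - apply rst_sym; assumption.
  - eapply rst_trans; eassumption.
Qed.

Lemma idempotent_deg (u : S) (x : Car A) :
  idempotent u -> eact u x <> ezero -> gs_deg u = gone.
Proof.
  intros Hu H. apply gidem_eq1. rewrite <- gs_degM; rewrite Hu; [reflexivity|].
  intros E. apply H. rewrite E. apply eact0.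
Qed.

Lemma idempotent_fixes_val (u : S) (w : DegOneSAct A) :
  idempotent u -> act u w = w -> eact u (proj1_sig w) = proj1_sig w.
Proof.
  intros Hu H. destruct (excluded_middle_informative (eact u (proj1_sig w) = ezero)) as [E|E].
  - change (to_deg_one (eact u (proj1_sig w)) = w) in H.
    rewrite E, to_deg_one_zero in H. rewrite E, <- H. reflexivity.
  - apply (f_equal (@proj1_sig _ _)) in H. simpl in H.
    rewrite eact_deg, (idempotent_deg Hu E), gmul1l in H by exact E.
    destruct (proj2_sig w) as [Z|Z].
    + exfalso. apply E. rewrite Z. apply eact_zero.
    + change (edeg (proj1_sig w) = gone) in Z. rewrite Z, ginv1, eshift_one in H. exact H.
Qed.

Lemma tens_equiv_idempotents (u u' : S) (w : DegOneSAct A) :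
  idempotent u -> idempotent u' -> act u w = w -> act u' w = w ->
  tens_equiv (u, w) (u', w).
Proof.
  intros Hu Hu' H H'.
  assert (V : eact u (proj1_sig w) = eact u' (proj1_sig w)).
  { rewrite (idempotent_fixes_val Hu H), (idempotent_fixes_val Hu' H'). reflexivity. }
  pose proof (tens_equiv_to_deg_one
                (proj2 (fg_closed A) (u, proj1_sig w) (u', proj1_sig w) V)) as C.
  simpl in C. rewrite to_deg_one_val in C. exact C.
Qed.

Lemma tens_equiv_local_unit (s : S) (a : DegOneSAct A) :
  exists u, idempotent u /\ tens_equiv (s, a) (u, act s a) /\ act u (act s a) = act s a.
Proof.
  destruct (S_local_units s) as [u [v [Hu [_ [Hus _]]]]].
  exists u. split; [exact Hu | split].
  - rewrite <- Hus at 1. apply rst_step. exists u, s, a. auto.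
  - rewrite <- actA, Hus. reflexivity.
Qed.

(* Every (s, a) is equivalent to (u, s a) for an idempotent u with u s = s; a nonzero
   idempotent has degree one, so u acts on A_e as on A and closedness of A applies. *)
Lemma DegOne_closed : closed_act (DegOneSAct A).
Proof.
  split.
  - intros a. destruct (deg_one_act_unital a) as [s [b H]]. exists (s, b). exact H.
  - intros [s a] [s' a'] H. simpl in H.
    destruct (tens_equiv_local_unit s a) as [u [Hu [C Eu]]].
    destruct (tens_equiv_local_unit s' a') as [u' [Hu' [C' Eu']]].
    eapply rst_trans; [exact C|]. eapply rst_trans; [|apply rst_sym; exact C'].
    change (act s a = act s' a') in H.
    rewrite <- H. apply tens_equiv_idempotents; auto. rewrite H. exact Eu'.
Qed.

Definition DegOneOb : FActOb S := {| fa_act := DegOneSAct A; fa_closed := DegOne_closed |}.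

End DegreeOneClosed.

Section IndDegOne.
Variables (G : Group) (S : GrSemigroup G) (A : EqvOb S).
Hypothesis S_local_units : has_local_units S.

Definition spread (t : IndCar (DegOneSAct A)) : Car A :=
  eshift (tdeg t) (proj1_sig (tval t)).

Definition gather (y : Car A) : IndCar (DegOneSAct A) := tag (to_deg_one y) (edeg y).

Lemma spread_null : spread tnull = ezero.
Proof. unfold spread. rewrite tval_tnull. apply eshift_zero. Qed.

Lemma spread_act (s : S) (t : IndCar (DegOneSAct A)) :
  spread (ind_act s t) = eact s (spread t).
Proof.
  unfold spread at 2. rewrite <- eshift_act.
  destruct (excluded_middle_informative (eact s (proj1_sig (tval t)) = ezero)) as [E|E].
  - unfold ind_act. rewrite tag_null, spread_null, E, eshift_zero; [reflexivity|].
    change (to_deg_one (eact s (proj1_sig (tval t))) = deg_one_zero).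
    rewrite E. apply to_deg_one_zero.
  - assert (E' : deg_one_act s (tval t) <> deg_one_zero)
      by (intros Z; exact (E (to_deg_one_eq0 Z))).
    unfold spread, ind_act. rewrite tval_tag, tdeg_tag by exact E'.
    change (eshift (gmul (gs_deg s) (tdeg t)) (proj1_sig (deg_one_act s (tval t))) =
            eshift (tdeg t) (eact s (proj1_sig (tval t)))).
    rewrite val_deg_one_act, eshift_mul, gmulKl by exact E. reflexivity.
Qed.

Lemma spread_homog a (t : IndCar (DegOneSAct A)) :
  t = tnull \/ tdeg t = a -> spread t = ezero \/ edeg (spread t) = a.
Proof.
  intros [H|H].
  - left. rewrite H. apply spread_null.
  - unfold spread.
    destruct (excluded_middle_informative (proj1_sig (tval t) = ezero)) as [Z|Z].
    + left. rewrite Z. apply eshift_zero.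
    + right. rewrite eshift_deg, deg_one_deg, gmul1l by exact Z. exact H.
Qed.

Lemma spread_shift g (t : IndCar (DegOneSAct A)) :
  spread (ind_map (fun x => x) (fun h => gmul h g) t) = eshift g (spread t).
Proof.
  unfold ind_map.
  destruct (excluded_middle_informative (tval t = deg_one_zero)) as [E|E].
  - rewrite tag_null, spread_null by exact E. unfold spread. rewrite E.
    simpl. rewrite !eshift_zero. reflexivity.
  - unfold spread. rewrite tval_tag, tdeg_tag, eshift_mul by exact E. reflexivity.
Qed.

Lemma gather_zero : gather ezero = tnull.
Proof. apply tag_null, to_deg_one_zero. Qed.

Lemma tdeg_gather (y : Car A) : y <> ezero -> tdeg (gather y) = edeg y.
Proof. intros H. apply tdeg_tag. intros Z. exact (H (to_deg_one_eq0 Z)). Qed.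

Lemma gather_act (s : S) (y : Car A) : gather (eact s y) = ind_act s (gather y).
Proof.
  unfold gather at 2. rewrite ind_act_tag.
  change (gather (eact s y) = tag (deg_one_act s (to_deg_one y)) (gmul (gs_deg s) (edeg y))).
  rewrite deg_one_act_to_deg_one.
  destruct (excluded_middle_informative (eact s y = ezero)) as [E|E].
  - rewrite E, gather_zero, to_deg_one_zero, tag_null; reflexivity.
  - unfold gather. rewrite eact_deg by exact E. reflexivity.
Qed.

Lemma gather_homog a (y : Car A) :
  y = ezero \/ edeg y = a -> gather y = tnull \/ tdeg (gather y) = a.
Proof.
  intros [H|H].
  - left. rewrite H. apply gather_zero.
  - destruct (excluded_middle_informative (y = ezero)) as [E|E].
    + left. rewrite E. apply gather_zero.
    + right. rewrite tdeg_gather by exact E. exact H.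
Qed.

Lemma gather_shift g (y : Car A) :
  gather (eshift g y) = ind_map (fun x => x) (fun h => gmul h g) (gather y).
Proof.
  unfold gather at 2. rewrite ind_map_tag by reflexivity.
  destruct (excluded_middle_informative (y = ezero)) as [E|E].
  - rewrite E, eshift_zero, gather_zero, to_deg_one_zero, tag_null; reflexivity.
  - unfold gather. rewrite to_deg_one_shift, eshift_deg by exact E. reflexivity.
Qed.

Lemma gather_spread (t : IndCar (DegOneSAct A)) : gather (spread t) = t.
Proof.
  destruct (excluded_middle_informative (proj1_sig (tval t) = ezero)) as [E|E].
  - unfold spread. rewrite E, eshift_zero, gather_zero. symmetry.
    apply tagged_null, DegOne_ext, E.
  - unfold spread. rewrite gather_shift. unfold gather.
    rewrite to_deg_one_val, deg_one_deg, ind_map_tag, gmul1l by (exact E || reflexivity).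
    apply tag_eta.
Qed.

Lemma spread_gather (y : Car A) : spread (gather y) = y.
Proof.
  destruct (excluded_middle_informative (y = ezero)) as [E|E].
  - rewrite E, gather_zero. apply spread_null.
  - unfold spread. rewrite tdeg_gather by exact E. unfold gather. rewrite tval_tag.
    simpl. rewrite eshift_mul, gmulVl. apply eshift_one.
Qed.

Definition spread_hom : EqvHom (IndEqvOb (DegOneOb A S_local_units)) A :=
  @Build_EqvHom G S (IndEqvOb (DegOneOb A S_local_units)) A
    (@mkHom G S (IndOb (DegOneOb A S_local_units)) A spread spread_act spread_homog)
    spread_shift.

Definition gather_hom : EqvHom A (IndEqvOb (DegOneOb A S_local_units)) :=
  @Build_EqvHom G S A (IndEqvOb (DegOneOb A S_local_units))
    (@mkHom G S A (IndOb (DegOneOb A S_local_units)) gather gather_act gather_homog)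
    gather_shift.

End IndDegOne.

Lemma Ind_ess_surj (G : Group) (S : GrSemigroup G) :
  has_local_units S -> ess_surj (Ind S).
Proof.
  intros S_local_units A. exists (DegOneOb A S_local_units).
  exists (spread_hom A S_local_units), (gather_hom A S_local_units).
  split; intros x; [apply gather_spread | apply spread_gather].
Qed.

Lemma Ind_ff_ess_surj (G : Group) (S : GrSemigroup G) :
  has_local_units S -> ff_ess_surj (Ind S).
Proof.
  intros S_local_units.
  split; [apply Ind_faithful | split; [apply Ind_full | apply Ind_ess_surj, S_local_units]].
Qed.

Theorem theorem4p4 (G : Group) (S T : GrSemigroup G) :
  has_local_units S -> has_local_units T ->
  graded_Morita_equivalent S T -> Morita_equivalent S T.
Proof.
  (* Only F needs to be graded. *)
  intros S_local_units T_local_units (F & F' & F_graded & _ & [eta] & [eps]).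
  apply (CatEquivalent_trans (ff_ess_surj_CatEquivalent (Ind_ff_ess_surj S_local_units))).
  apply (CatEquivalent_trans (ff_ess_surj_CatEquivalent
           (EqvLift_ff_ess_surj F_graded (NatIso_ff_ess_surj eta eps)))).
  exact (CatEquivalent_sym (ff_ess_surj_CatEquivalent (Ind_ff_ess_surj T_local_units))).
Qed.
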